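(* Let $a$ and $b$ be positive integers and let $d$ be the largest practical number dividing $\gcd(a,b)$. Consider the numbers $an+b$ with $n$ ranging over the nonnegative integers. Then: (a) If there exists a prime $p\le \sigma(d)+1$ such that $p\nmid \frac{a}{d}$, then there are infinitely many practical numbers of the form $an+b$. (b) If $b$ is a practical number and every prime $p\le\sigma(d)+1$ divides $\frac{a}{d}$, then there is exactly one practical number of the form $an+b$ (namely $b$). (c) If $b$ is not a practical number and every prime $p\le\sigma(d)+1$ divides $\frac{a}{d}$, then there are no practical numbers of the form $an+b$.
   Context: A positive integer $N$ is called a practical number if every integer in $[1,N]$ can be expressed as a sum of distinct positive divisors of $N$. $\sigma(N)$ denotes the sum of the positive divisors of $N$. *)

From mathcomp Require Import all_boot.
Set Implicit Arguments. Unset Strict Implicit. Unset Printing Implicit Defensive.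

Definition sigma (N : nat) : nat := \sum_(d <- divisors N) d.

(* N is practical: N >= 1 and every m in [1, N] is a sum of distinct positive
   divisors of N, i.e. the sum of a subsequence of the (duplicate-free)
   list of divisors of N. *)
Definition practical (N : nat) : Prop :=
  0 < N /\
  forall m, 1 <= m <= N -> exists s : seq nat, subseq s (divisors N) /\ sumn s = m.

Definition largest_practical_divisor (d g : nat) : Prop :=
  practical d /\ d %| g /\ (forall e, practical e -> e %| g -> e <= d).

From mathcomp Require Import all_boot zify.
Set Implicit Arguments. Unset Strict Implicit. Unset Printing Implicit Defensive.

(* Multiplying a practical number m by any k <= sigma m + 1 gives a practical
   number. Write a = a' d and b = b' d. If some prime p <= sigma d + 1 does not
   divide a', then for large j some a' n + b' equals p^j t with t <= p^j, so
   a n + b = (d p^j) t is practical. If every such prime divides a', none of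
   them divides a' n + b' (it would divide b', and d p would be a larger
   practical divisor of gcd(a, b)); then for n > 0 every divisor of
   (a' n + b') d that is at most sigma d + 1 divides d, and distinct divisors
   of d cannot add up to sigma d + 1. *)

Definition subseq_sum (D : seq nat) (x : nat) : Prop :=
  exists s : seq nat, subseq s D /\ sumn s = x.

Definition complete_seq (l : seq nat) : Prop :=
  forall l1 x l2, l = l1 ++ x :: l2 -> x <= (sumn l1).+1.

Lemma mem_leq_sumn x (s : seq nat) : x \in s -> x <= sumn s.
Proof. by move=> xs; rewrite sumnE (big_rem x) //= leq_addr. Qed.

Lemma leq_sumn_subset (s t : seq nat) :
  uniq s -> uniq t -> {subset s <= t} -> sumn s <= sumn t.
Proof.
by move=> us ut st; rewrite !sumnE (uniq_sub_le_big leqnn (fun m n => leq_addr n m)).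
Qed.

Lemma subseq_sum_subset (D s : seq nat) :
  uniq D -> uniq s -> {subset s <= D} -> subseq_sum D (sumn s).
Proof.
move=> uD us sD; exists [seq y <- D | y \in s]; split; first exact: filter_subseq.
apply/perm_sumn/uniq_perm; rewrite ?filter_uniq // => y.
by rewrite mem_filter andb_idr //; apply: sD.
Qed.

Lemma complete_seq_subseq_sum l x :
  complete_seq l -> x <= sumn l -> subseq_sum l x.
Proof.
elim/last_ind: l x => [|l z IHl] x compl.
  by rewrite leqn0 => /eqP ->; exists [::].
have compl' : complete_seq l.
  by move=> l1 y l2 def_l; apply: (compl l1 y (rcons l2 z)); rewrite def_l rcons_cat.
have le_z : z <= (sumn l).+1 by apply: (compl l z [::]); rewrite cats1.
rewrite sumn_rcons => le_x.
have [le_xl | lt_lx] := leqP x (sumn l).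
  have [s [sl <-]] := IHl x compl' le_xl.
  by exists s; split; first exact: subseq_trans sl (subseq_rcons l z).
have [s [sl sum_s]] := IHl (x - z) compl' (ltac:(lia)).
exists (rcons s z); split; first by rewrite -!cats1 cat_subseq.
by rewrite sumn_rcons sum_s; lia.
Qed.

Lemma leq_sigma N : 0 < N -> N <= sigma N.
Proof. by move=> N_gt0; rewrite /sigma -sumnE mem_leq_sumn // -dvdn_divisors. Qed.

Lemma practical_complete_divisors N : practical N -> complete_seq (divisors N).
Proof.
case=> N_gt0 subsum_N l1 e l2 def_D.
have e_D : e \in divisors N by rewrite def_D mem_cat mem_head orbT.
have le_eN : e <= N by rewrite dvdn_leq // dvdn_divisors.
have [le_e1 | lt_1e] := leqP e 1; first exact: leq_trans le_e1 _.
have [s [s_D sum_s]] := subsum_N e.-1 (ltac:(lia)).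
suff : e.-1 <= sumn l1 by lia.
have uniq_D := divisors_uniq N; rewrite def_D cat_uniq in uniq_D.
have /and3P [uniq_l1 _ _] := uniq_D.
rewrite -sum_s leq_sumn_subset ?(subseq_uniq s_D) ?divisors_uniq // => y y_s.
have lt_ye : y < e by have := mem_leq_sumn y_s; rewrite sum_s; lia.
have : y \in l1 ++ e :: l2 by rewrite -def_D (mem_subseq s_D).
rewrite mem_cat => /orP [//|y_el2]; exfalso.
have := sorted_divisors N; rewrite def_D sorted_cat_cons => /andP [_ path_e].
have /allP le_e_l2 := order_path_min leq_trans path_e.
by move: y_el2; rewrite inE => /orP [/eqP y_e | /le_e_l2 /= le_ey]; lia.
Qed.

Lemma practical_subseq_sum_sigma N x :
  practical N -> x <= sigma N -> subseq_sum (divisors N) x.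
Proof.
move=> pN; rewrite /sigma -sumnE.
exact: complete_seq_subseq_sum (practical_complete_divisors pN).
Qed.

(* Write x = q k + r with r < k: both q <= m <= sigma m and r <= k - 1 <= sigma m
   are sums of distinct divisors of m, and the divisors e k (e | m) used for q
   all exceed the divisors used for r. *)
Lemma practical_mul m k : practical m -> 0 < k -> k <= (sigma m).+1 ->
  practical (m * k).
Proof.
move=> pm k_gt0 le_k; have m_gt0 := pm.1.
have mk_gt0 : 0 < m * k by rewrite muln_gt0 m_gt0.
split=> // x /andP [x_gt0 le_x].
have lt_rk : x %% k < k := ltn_pmod x k_gt0.
have le_qm : x %/ k <= m by rewrite -(leq_pmul2r k_gt0) (leq_trans (leq_divM x k)).
have [s1 [s1_D sum_s1]] : subseq_sum (divisors m) (x %% k).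
  by apply: practical_subseq_sum_sigma pm _; lia.
have [s2 [s2_D sum_s2]] : subseq_sum (divisors m) (x %/ k).
  exact: practical_subseq_sum_sigma pm (leq_trans le_qm (leq_sigma m_gt0)).
have dvd_D e : e \in divisors m -> e %| m by rewrite -dvdn_divisors.
have uniq_s1 := subseq_uniq s1_D (divisors_uniq m).
have uniq_s2 := subseq_uniq s2_D (divisors_uniq m).
have uniq_s : uniq ([seq e * k | e <- s2] ++ s1).
  have mulk_inj : injective (fun e => e * k).
    by move=> e f /eqP; rewrite eqn_pmul2r // => /eqP.
  rewrite cat_uniq uniq_s1 (map_inj_uniq mulk_inj) uniq_s2 andbT /=.
  apply/hasPn => y y_s1; apply/mapP => -[e e_s2 y_ek].
  have e_gt0 : 0 < e by apply: dvdn_gt0 m_gt0 (dvd_D e (mem_subseq s2_D e_s2)).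
  have := mem_leq_sumn y_s1; rewrite sum_s1 y_ek; nia.
rewrite [x](divn_eq x k) -sum_s1 -sum_s2.
have -> : sumn s2 * k = sumn [seq e * k | e <- s2].
  by rewrite !sumnE big_map big_distrl.
rewrite -sumn_cat; apply: subseq_sum_subset; rewrite ?divisors_uniq // => y.
rewrite mem_cat -dvdn_divisors // => /orP [/mapP [e e_s2 ->] | y_s1].
  by rewrite dvdn_pmul2r // dvd_D ?(mem_subseq s2_D).
by rewrite dvdn_mulr // dvd_D ?(mem_subseq s1_D).
Qed.

Lemma practical_mul_expn d p i : practical d -> 0 < p -> p <= (sigma d).+1 ->
  practical (d * p ^ i).
Proof.
move=> pd p_gt0 le_p; elim: i => [|i IHi]; first by rewrite muln1.
rewrite expnSr mulnA; apply: (practical_mul IHi p_gt0).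
have [-> | i_gt0] := posnP i; first by rewrite muln1.
have le_p_pi : p <= p ^ i by rewrite -{1}(expn1 p) leq_pexp2l.
have le_p_dpi : p <= d * p ^ i := leq_trans le_p_pi (leq_pmull _ pd.1).
by apply: leqW; rewrite (leq_trans le_p_dpi) // leq_sigma // (leq_trans p_gt0).
Qed.

Lemma coprime_rough e m B : 0 < e -> 0 < m -> e <= B ->
  (forall p, prime p -> p %| m -> B < p) -> coprime e m.
Proof.
move=> e_gt0 m_gt0 le_eB rough_m; rewrite coprime_has_primes //.
apply/hasPn => p; rewrite !mem_primes e_gt0 m_gt0 /= => /andP [pr_p dvd_pm].
apply/negP => /andP [_ dvd_pe].
by have := rough_m p pr_p dvd_pm; rewrite ltnNge (leq_trans (dvdn_leq e_gt0 dvd_pe)).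
Qed.

Lemma largest_practical_divisor_ndvd d g p : largest_practical_divisor d g ->
  prime p -> p <= (sigma d).+1 -> ~~ (d * p %| g).
Proof.
case=> pd [_ max_d] pr_p le_p; apply/negP => dvd_dp_g.
have := max_d _ (practical_mul pd (prime_gt0 pr_p) le_p) dvd_dp_g.
by rewrite leqNgt ltn_Pmulr ?prime_gt1 ?pd.1.
Qed.

Lemma not_practical_mul_rough d m : 0 < d -> 1 < m ->
  (forall p, prime p -> p %| m -> (sigma d).+1 < p) -> ~ practical (m * d).
Proof.
move=> d_gt0 m_gt1 rough_m [md_gt0 subsum_md].
have m_gt0 : 0 < m := ltnW m_gt1.
have lt_m : (sigma d).+1 < m.
  by rewrite (leq_trans (rough_m _ (pdiv_prime m_gt1) (pdiv_dvd m))) ?pdiv_leq.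
have [s [s_D sum_s]] := subsum_md (sigma d).+1 (ltac:(nia)).
suff : sumn s <= sigma d by rewrite sum_s ltnn.
rewrite /sigma -sumnE.
apply: leq_sumn_subset (subseq_uniq s_D (divisors_uniq _)) (divisors_uniq d) _.
move=> e e_s; have e_md : e \in divisors (m * d) := mem_subseq s_D e_s.
rewrite -dvdn_divisors // in e_md; have e_gt0 := dvdn_gt0 md_gt0 e_md.
have le_e : e <= (sigma d).+1 by rewrite -sum_s mem_leq_sumn.
by rewrite -dvdn_divisors // -(Gauss_dvdr d (coprime_rough e_gt0 m_gt0 le_e rough_m)).
Qed.

(* With a u = -1 mod P from Bezout and u < P, n := u b works. *)
Lemma ap_multiple_small_cofactor a b P : 0 < a -> 0 < b -> 0 < P -> coprime a P ->
  exists n t, a * n + b = P * t /\ 0 < t <= a * b.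
Proof.
move=> a_gt0 b_gt0 P_gt0 co_aP; have [u lt_uP] := Bezoutl a P_gt0.
rewrite gcdnC (eqP co_aP) => dvd_P_ua1.
have dvd_P : P %| a * (u * b) + b.
  by rewrite (_ : _ + b = (1 + u * a) * b) ?dvdn_mulr //; lia.
exists (u * b), ((a * (u * b) + b) %/ P); split; first by rewrite [RHS]mulnC divnK.
rewrite divn_gt0 // (dvdn_leq _ dvd_P) ?addn_gt0 ?b_gt0 ?orbT //=.
rewrite -(leq_pmul2r P_gt0) divnK //.
have := leq_mul (leqnn (a * b)) lt_uP; nia.
Qed.

Lemma practical_ap_unbounded a b d p M : practical d -> d %| a -> d %| b ->
    0 < a -> 0 < b -> prime p -> p <= (sigma d).+1 -> ~~ (p %| a %/ d) ->
  exists n, M <= a * n + b /\ practical (a * n + b).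
Proof.
move=> pd /dvdnP [a' ->] /dvdnP [b' ->]; rewrite !muln_gt0 => /andP [a'_gt0 _].
move=> /andP [b'_gt0 d_gt0] pr_p le_p; rewrite mulnK // => ndvd_pa'.
set P := p ^ (M + a' * b').
have lt_P : M + a' * b' < P := ltn_expl _ (prime_gt1 pr_p).
have co_a'P : coprime a' P by rewrite coprimeXr // coprime_sym prime_coprime.
have [n [t [def_t /andP [t_gt0 le_t]]]] :=
  ap_multiple_small_cofactor a'_gt0 b'_gt0 (leq_ltn_trans (leq0n _) lt_P) co_a'P.
exists n; have -> : a' * d * n + b' * d = d * P * t by rewrite -[RHS]mulnA -def_t; nia.
have le_P_dP : P <= d * P := leq_pmull P d_gt0.
split; first nia.
apply: (practical_mul (practical_mul_expn _ pd (prime_gt0 pr_p) le_p) t_gt0).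
by apply: leqW; rewrite (leq_trans _ (leq_sigma _)); lia.
Qed.

Lemma not_practical_ap a b d n : largest_practical_divisor d (gcdn a b) ->
    0 < a -> 0 < b -> (forall p, prime p -> p <= (sigma d).+1 -> p %| a %/ d) ->
  0 < n -> ~ practical (a * n + b).
Proof.
move=> max_d; have [pd [dvd_dg _]] := max_d; have d_gt0 := pd.1.
have /dvdnP [a' def_a] := dvdn_trans dvd_dg (dvdn_gcdl a b).
have /dvdnP [b' def_b] := dvdn_trans dvd_dg (dvdn_gcdr a b).
subst a b; rewrite !muln_gt0 mulnK // => /andP [a'_gt0 _] /andP [b'_gt0 _].
move=> small_a' n_gt0; rewrite (_ : _ + _ = (a' * n + b') * d); last by nia.
apply: not_practical_mul_rough => // [|p pr_p dvd_p]; first by nia.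
rewrite ltnNge; apply/negP => le_p.
have dvd_pa' := small_a' p pr_p le_p.
have dvd_pb' : p %| b' by rewrite -(dvdn_addr b' (dvdn_mulr n dvd_pa')).
apply: (negP (largest_practical_divisor_ndvd max_d pr_p le_p)).
by rewrite dvdn_gcd ![_ * d]mulnC !dvdn_pmul2l // dvd_pa' dvd_pb'.
Qed.

Theorem theorem2p2 (a b d : nat) (ha : 0 < a) (hb : 0 < b)
  (hd : largest_practical_divisor d (gcdn a b)) :
  ((exists p, prime p /\ p <= sigma d + 1 /\ ~~ (p %| a %/ d)) ->
     forall M, exists n, M <= a * n + b /\ practical (a * n + b))
  /\
  (practical b -> (forall p, prime p -> p <= sigma d + 1 -> p %| a %/ d) ->
     forall N, (exists n, N = a * n + b /\ practical N) <-> N = b)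
  /\
  (~ practical b -> (forall p, prime p -> p <= sigma d + 1 -> p %| a %/ d) ->
     forall n, ~ practical (a * n + b)).
Proof.
have [pd [dvd_dg _]] := hd; rewrite addn1.
have dvd_da := dvdn_trans dvd_dg (dvdn_gcdl a b).
have dvd_db := dvdn_trans dvd_dg (dvdn_gcdr a b).
split; [|split].
- move=> [p [pr_p [le_p ndvd_p]]] M.
  exact: practical_ap_unbounded pd dvd_da dvd_db ha hb pr_p le_p ndvd_p.
- move=> pb small N; split=> [[[|n] [-> pN]] | ->]; last by exists 0; rewrite muln0.
    by rewrite muln0.
  by case: (not_practical_ap hd ha hb small (ltn0Sn n) pN).
- move=> npb small [|n]; first by rewrite muln0.
  exact: not_practical_ap hd ha hb small (ltn0Sn n).
Qed.
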